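(* Let $G$ be a group, $H$ a finite index normal subgroup of $G$, $K$ a normal subgroup of $G$, and $g\in H$. If $\nu(g;G,K)$ is infinite, then $\nu(g;H,H\cap K)$ is infinite.
   Context: For a group $G$, a normal subgroup $K$ and $g\in G$, with $\psi:G\to G/K$ the quotient map: if $g\in K$, $\nu(g;G,K)$ is the supremum of $o(\psi(a),G/K)$ (order of $\psi(a)$) over all $a\in G$ such that $a^n=g$ for some integer $n$; if $g\notin K$, $\nu(g;G,K)$ is the supremum of all non-zero integers $n$ for which $g=a^n$ for some $a\in G$. $\nu(g;G,K)$ is infinite if the relevant set is unbounded. The same definition applies to $\nu(g;H,H\cap K)$ within the group $H$ and its normal subgroup $H\cap K$. *)

From Stdlib Require Import ZArith List.
Open Scope Z_scope.

Record group := Group {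
  carrier :> Type;
  mul : carrier -> carrier -> carrier;
  one : carrier;
  inv : carrier -> carrier;
  mulA : forall x y z, mul x (mul y z) = mul (mul x y) z;
  mul1g : forall x, mul one x = x;
  mulVg : forall x, mul (inv x) x = one
}.

Arguments mul {g}. Arguments one {g}. Arguments inv {g}.

Fixpoint npow {G : group} (a : G) (n : nat) : G :=
  match n with O => one | S m => mul a (npow a m) end.

Definition zpow {G : group} (a : G) (z : Z) : G :=
  match z with
  | Z0 => one
  | Zpos p => npow a (Pos.to_nat p)
  | Zneg p => inv (npow a (Pos.to_nat p))
  end.

Definition is_subgroup {G : group} (H : G -> Prop) : Prop :=
  H one /\ (forall x y, H x -> H y -> H (mul x y)) /\ (forall x, H x -> H (inv x)).

Definition is_normal {G : group} (H : G -> Prop) : Prop :=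
  is_subgroup H /\ forall x y, H x -> H (mul (inv y) (mul x y)).

(* finitely many left cosets r H cover G *)
Definition finite_index {G : group} (H : G -> Prop) : Prop :=
  is_subgroup H /\ exists l : list G, forall x, exists r, In r l /\ H (mul (inv r) x).

(* Order of the coset a N in the quotient S/N (a in S, N normal in S):
   [has_qorder N a n] : the order of aN is the positive integer n;
   [qorder_infinite N a] : aN has infinite order. *)
Definition has_qorder {G : group} (N : G -> Prop) (a : G) (n : nat) : Prop :=
  (0 < n)%nat /\ N (npow a n) /\ forall k, (0 < k < n)%nat -> ~ N (npow a k).

Definition qorder_infinite {G : group} (N : G -> Prop) (a : G) : Prop :=
  forall k, (0 < k)%nat -> ~ N (npow a k).

(* [nu_infinite S N g] : nu(g; S, N) is infinite, where S is the ambient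
   group (a subgroup of G, given by a predicate) and N a normal subgroup of S.
   - if g in N: the orders o(psi(a), S/N), over a in S with a^n = g for some
     integer n, have supremum infinity (some order infinite, or orders unbounded);
   - if g notin N: the nonzero integers n with g = a^n for some a in S are
     unbounded (above). *)
Definition nu_infinite {G : group} (S N : G -> Prop) (g : G) : Prop :=
  (N g ->
    forall M : nat, exists a, S a /\ (exists n : Z, zpow a n = g) /\
      (qorder_infinite N a \/ exists m, has_qorder N a m /\ (M < m)%nat)) /\
  (~ N g ->
    forall M : Z, exists n : Z, n <> 0 /\ M < n /\ exists a, S a /\ zpow a n = g).

(** Let m be the number of cosets of H.  By the pigeonhole principle every
    a in G has a least positive power a^d lying in H, with d <= m, and every
    power of a lying in H is a power of a^d.  So a root g = a^n with g in H is
    also a root g = (a^d)^(n/d) inside H, whose exponent is smaller by a factor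
    at most m; and the order of a^d modulo H ∩ K is at least o(aK)/d >= o(aK)/m.
    Unbounded exponents, resp. orders, in G therefore stay unbounded in H. *)

From Stdlib Require Import ZArith List Lia Wf_nat Permutation Classical.

Section Powers.
Variable G : group.

Lemma npow_add (a : G) i j : npow a (i + j) = mul (npow a i) (npow a j).
Proof.
  induction i as [|i IH]; simpl.
  - now rewrite mul1g.
  - now rewrite IH, mulA.
Qed.

Lemma npow_mul (a : G) d k : npow (npow a d) k = npow a (d * k).
Proof.
  induction k as [|k IH]; simpl.
  - now rewrite Nat.mul_0_r.
  - rewrite IH, <- npow_add. f_equal. lia.
Qed.

Lemma npowAC (a : G) d k : npow (npow a d) k = npow (npow a k) d.
Proof. now rewrite !npow_mul, Nat.mul_comm. Qed.

Lemma zpow_of_nat (a : G) k : zpow a (Z.of_nat k) = npow a k.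
Proof. destruct k; simpl; [reflexivity|]. now rewrite SuccNat2Pos.id_succ. Qed.

Lemma zpow_opp_of_nat (a : G) k : (0 < k)%nat -> zpow a (- Z.of_nat k) = inv (npow a k).
Proof.
  intros Hk. destruct k as [|k]; [lia|]. simpl.
  now rewrite SuccNat2Pos.id_succ.
Qed.

Lemma zpow_npow (a : G) d z : (0 < d)%nat ->
  zpow (npow a d) z = zpow a (Z.of_nat d * z).
Proof.
  intros Hd. destruct z as [|p|p].
  - now rewrite Z.mul_0_r.
  - replace (Z.of_nat d * Z.pos p)%Z with (Z.of_nat (d * Pos.to_nat p)) by lia.
    now rewrite zpow_of_nat, <- npow_mul.
  - replace (Z.of_nat d * Z.neg p)%Z with (- Z.of_nat (d * Pos.to_nat p))%Z by lia.
    rewrite zpow_opp_of_nat by lia. now rewrite <- npow_mul.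
Qed.

End Powers.

Section Subgroup.
Variable G : group.
Variable H : G -> Prop.
Hypothesis H_subgroup : is_subgroup H.

Lemma subgroup_npow (a : G) k : H a -> H (npow a k).
Proof.
  destruct H_subgroup as [H1 [HM _]]. intros Ha.
  induction k; simpl; auto.
Qed.

Lemma subgroup_cancel_l (c x y : G) : H (mul c x) -> H (mul c (mul x y)) -> H y.
Proof.
  destruct H_subgroup as [_ [HM HV]]. intros Hcx Hcxy.
  rewrite mulA in Hcxy.
  pose proof (HM _ _ (HV _ Hcx) Hcxy) as Hy.
  now rewrite mulA, mulVg, mul1g in Hy.
Qed.

Lemma subgroup_npow_cancel (c a : G) i j :
  H (mul c (npow a i)) -> H (mul c (npow a (i + j))) -> H (npow a j).
Proof. rewrite npow_add. apply subgroup_cancel_l. Qed.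

Lemma subgroup_npow_abs (a : G) n : H (zpow a n) -> H (npow a (Z.abs_nat n)).
Proof.
  destruct (Z_lt_le_dec n 0) as [Hn|Hn].
  - replace n with (- Z.of_nat (Z.abs_nat n))%Z at 1 by lia.
    rewrite zpow_opp_of_nat by lia. intros HV.
    destruct H_subgroup as [H1 _].
    apply (subgroup_cancel_l one (inv (npow a (Z.abs_nat n))));
      rewrite mul1g; [exact HV|]. now rewrite mulVg.
  - replace n with (Z.of_nat (Z.abs_nat n)) at 1 by lia.
    now rewrite zpow_of_nat.
Qed.

Lemma subgroup_npow_mod (a : G) d k :
  H (npow a d) -> H (npow a k) -> H (npow a (k mod d)).
Proof.
  intros Hd Hk.
  apply (subgroup_npow_cancel one a (d * (k / d))); rewrite mul1g.
  - rewrite <- npow_mul. now apply subgroup_npow.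
  - now rewrite <- Nat.div_mod_eq.
Qed.

End Subgroup.

Section FiniteIndex.
Variable G : group.
Variable H : G -> Prop.
Hypothesis H_subgroup : is_subgroup H.
Variable reps : list G.
Hypothesis reps_cover : forall x, exists r, In r reps /\ H (mul (inv r) x).

Lemma cover_npow_in_subgroup (a : G) :
  exists d, (0 < d <= length reps)%nat /\ H (npow a d).
Proof.
  set (same_coset i r := H (mul (inv r) (npow a i))).
  assert (diff : forall i j r, (i < j)%nat -> same_coset i r -> same_coset j r ->
                   H (npow a (j - i))).
  { intros i j r Hij Hi Hj. unfold same_coset in Hj.
    replace j with (i + (j - i))%nat in Hj by lia.
    exact (subgroup_npow_cancel _ _ H_subgroup _ _ _ _ Hi Hj). }
  assert (Hall : Forall (fun i => Exists (same_coset i) reps) (seq 0 (S (length reps)))).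
  { apply Forall_forall. intros i _. apply Exists_exists, reps_cover. }
  destruct (Permutation_pigeonhole_rel same_coset Hall) as (i & j & rest & Hperm & r & _ & Hi & Hj).
  { rewrite length_seq. lia. }
  pose proof (Permutation_NoDup Hperm (seq_NoDup _ _)) as Hnodup.
  assert (Hi_in : In i (seq 0 (S (length reps)))) by (eapply Permutation_in;
    [symmetry; exact Hperm | now left]).
  assert (Hj_in : In j (seq 0 (S (length reps)))) by (eapply Permutation_in;
    [symmetry; exact Hperm | right; now left]).
  apply in_seq in Hi_in. apply in_seq in Hj_in.
  assert (i <> j) by (intros <-; inversion_clear Hnodup; auto using in_eq).
  destruct (Nat.lt_gt_cases i j) as [[Hij | Hji] _]; [assumption| |].
  - exists (j - i)%nat. split; [lia | eauto].
  - exists (i - j)%nat. split; [lia | eauto].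
Qed.

Lemma cover_subgroup_period (a : G) :
  exists d, (0 < d <= length reps)%nat /\ H (npow a d) /\
    forall k, H (npow a k) -> Nat.divide d k.
Proof.
  set (P d := (0 < d)%nat /\ H (npow a d)).
  destruct (cover_npow_in_subgroup a) as [d0 [Hd0 Pd0]].
  destruct (dec_inh_nat_subset_has_unique_least_element P (fun n => classic (P n)))
    as (d & [[Hd Pd] Hleast] & _).
  { exists d0. split; [lia | exact Pd0]. }
  exists d. split; [|split; [exact Pd|]].
  - split; [exact Hd|]. transitivity d0; [|lia]. apply Hleast. split; [lia | exact Pd0].
  - intros k Hk. apply Nat.Lcm0.mod_divide.
    destruct (Nat.eq_dec (k mod d) 0) as [E|E]; [exact E|].
    assert (d <= k mod d)%nat.
    { apply Hleast. split; [lia|]. now apply (subgroup_npow_mod _ _ H_subgroup). }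
    pose proof (Nat.mod_upper_bound k d). lia.
Qed.

Lemma cover_root_in_subgroup (a g : G) n : H g -> zpow a n = g ->
  exists d q, (0 < d <= length reps)%nat /\ H (npow a d) /\
    Z.abs n = Z.of_nat (d * q) /\ zpow (npow a d) (Z.sgn n * Z.of_nat q) = g.
Proof.
  intros Hg Eg.
  destruct (cover_subgroup_period a) as (d & Hd & Hpow & Hdvd).
  destruct (Hdvd (Z.abs_nat n)) as [q Eq].
  { apply (subgroup_npow_abs _ _ H_subgroup). now rewrite Eg. }
  exists d, q. split; [exact Hd|]. split; [exact Hpow|].
  assert (En : Z.abs n = Z.of_nat (d * q)) by lia.
  split; [exact En|].
  rewrite zpow_npow by lia. rewrite <- Eg. f_equal.
  rewrite <- (Z.abs_sgn n) at 2. rewrite En, Nat2Z.inj_mul. ring.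
Qed.

End FiniteIndex.

Section QuotientOrder.
Variable G : group.
Variables N K : G -> Prop.
Hypothesis N_sub_K : forall x, N x -> K x.

Lemma has_qorder_exists (a : G) n : (0 < n)%nat -> N (npow a n) ->
  exists k, has_qorder N a k.
Proof.
  intros Hn HNn.
  destruct (dec_inh_nat_subset_has_unique_least_element
              (fun k => (0 < k)%nat /\ N (npow a k)) (fun k => classic _))
    as (k & [[Hk HNk] Hleast] & _).
  { now exists n. }
  exists k. split; [exact Hk|]. split; [exact HNk|].
  intros j Hj HNj. enough (k <= j)%nat by lia. apply Hleast. split; [lia | exact HNj].
Qed.

Lemma qorder_infinite_npow (a : G) d : (0 < d)%nat ->
  qorder_infinite K a -> qorder_infinite N (npow a d).
Proof.
  intros Hd Hinf k Hk HNk. rewrite npow_mul in HNk.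
  apply (Hinf (d * k)%nat); [lia | auto].
Qed.

Lemma has_qorder_npow_ge (a : G) d o k : (0 < d)%nat ->
  has_qorder K a o -> has_qorder N (npow a d) k -> (o <= d * k)%nat.
Proof.
  intros Hd (_ & _ & Hmin) (Hk & HNk & _).
  rewrite npow_mul in HNk.
  destruct (Nat.le_gt_cases o (d * k)) as [Hle | Hlt]; [exact Hle|].
  exfalso. apply (Hmin (d * k)%nat); [lia | auto].
Qed.

End QuotientOrder.

Theorem mainTheorem12 (G : group) (H K : G -> Prop) (g : G) :
  is_normal H -> finite_index H -> is_normal K -> H g ->
  nu_infinite (fun _ => True) K g ->
  nu_infinite H (fun x => H x /\ K x) g.
Proof.
  intros [H_subgroup _] [_ [reps reps_cover]] [K_subgroup _] Hg [nu_in nu_out].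
  set (m := length reps).
  assert (HK_sub_K : forall x, H x /\ K x -> K x) by tauto.
  split.
  - intros [_ Kg] M.
    destruct (nu_in Kg (M * m)%nat) as (a & _ & [n En] & Hord).
    destruct (cover_root_in_subgroup G H H_subgroup reps reps_cover a g n Hg En)
      as (d & q & Hd & Ha & _ & Eg).
    exists (npow a d). split; [exact Ha|]. split; [eauto|].
    destruct Hord as [Hinf | (o & Ho & HoM)].
    + left. apply (qorder_infinite_npow G _ K); [exact HK_sub_K | lia | exact Hinf].
    + right.
      assert (HKo : H (npow (npow a d) o) /\ K (npow (npow a d) o)).
      { split; [now apply (subgroup_npow _ _ H_subgroup)|].
        rewrite npowAC. apply (subgroup_npow _ _ K_subgroup). apply Ho. }
      destruct (has_qorder_exists G (fun x => H x /\ K x) (npow a d) o (proj1 Ho) HKo) as [k Hk].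
      exists k. split; [exact Hk|].
      pose proof (has_qorder_npow_ge G _ K HK_sub_K a d o k (proj1 Hd) Ho Hk). nia.
  - intros HKg M.
    assert (Kg : ~ K g) by tauto.
    destruct (nu_out Kg (Z.abs M * Z.of_nat m)%Z) as (n & Hn0 & HMn & a & _ & En).
    destruct (cover_root_in_subgroup G H H_subgroup reps reps_cover a g n Hg En)
      as (d & q & Hd & Ha & En' & Eg).
    assert (Hn : (0 < n)%Z) by nia.
    rewrite Z.sgn_pos, Z.mul_1_l in Eg by exact Hn.
    exists (Z.of_nat q). split; [|split]; [nia | nia | eauto].
Qed.
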